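(* Let $n>1$ be an integer and $D_n=\{f\in C([0,1];M_n): f(0)\text{ and }f(1)\text{ are scalar matrices}\}$. Then $TC(D_n)=\infty$.
   Context: All tensor products are minimal. For a unital $C^*$-algebra $A$ let $p_0,p_1:A\to A\otimes A$ be $p_0(a)=a\otimes 1$, $p_1(a)=1\otimes a$, and for $t\in[0,1]$ and a $C^*$-algebra $B$ let $\mathrm{ev}_t:B\otimes C[0,1]\to B$ be evaluation at $t$. The topological complexity $TC(A)$ is the minimal number $n$ such that there exist $C^*$-algebras $B_1,\dots,B_n$ with surjective $*$-homomorphisms $q_i:A\otimes A\to B_i$ satisfying $\bigcap_{i=1}^n\ker q_i=\{0\}$, together with $*$-homomorphisms $\sigma_i:A\to B_i\otimes C[0,1]$ such that $\mathrm{ev}_k\circ\sigma_i=q_i\circ p_k$ for $k=0,1$ and all $i$; $TC(A)=\infty$ if no such $n$ exists. *)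

From HB Require Import structures.
From mathcomp Require Import all_boot all_order all_algebra.
From mathcomp Require Import reals complex mxtens.

Set Implicit Arguments.
Unset Strict Implicit.
Unset Printing Implicit Defensive.

Import Order.TTheory GRing.Theory Num.Theory.
Local Open Scope ring_scope.
Local Open Scope complex_scope.

(* Abstract C*-algebras (possibly non-unital, possibly zero) over C.  *)
Record cstar_alg (R : realType) := CStarAlg {
  cs_car :> lmodType R[i];
  cs_mul : cs_car -> cs_car -> cs_car;
  cs_star : cs_car -> cs_car;
  cs_norm : cs_car -> R;
  cs_mulA : forall x y z, cs_mul x (cs_mul y z) = cs_mul (cs_mul x y) z;
  cs_mulDl : forall x y z, cs_mul (x + y) z = cs_mul x z + cs_mul y z;
  cs_mulDr : forall x y z, cs_mul x (y + z) = cs_mul x y + cs_mul x z;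
  cs_mulZl : forall (a : R[i]) x y, cs_mul (a *: x) y = a *: cs_mul x y;
  cs_mulZr : forall (a : R[i]) x y, cs_mul x (a *: y) = a *: cs_mul x y;
  cs_starK : forall x, cs_star (cs_star x) = x;
  cs_starD : forall x y, cs_star (x + y) = cs_star x + cs_star y;
  cs_starZ : forall (a : R[i]) x, cs_star (a *: x) = (a^*) *: cs_star x;
  cs_starM : forall x y, cs_star (cs_mul x y) = cs_mul (cs_star y) (cs_star x);
  cs_norm_eq0 : forall x, cs_norm x = 0 -> x = 0;
  cs_normZ : forall (a : R[i]) x, (cs_norm (a *: x))%:C = `|a| * (cs_norm x)%:C;
  cs_normD : forall x y, cs_norm (x + y) <= cs_norm x + cs_norm y;
  cs_normM : forall x y, cs_norm (cs_mul x y) <= cs_norm x * cs_norm y;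
  cs_normC : forall x, cs_norm (cs_mul (cs_star x) x) = cs_norm x ^+ 2;
  cs_complete : forall u : nat -> cs_car,
    (forall e : R, 0 < e -> exists N, forall m k, (N <= m)%N -> (N <= k)%N ->
        cs_norm (u m - u k) < e) ->
    exists l, forall e : R, 0 < e -> exists N, forall m, (N <= m)%N ->
        cs_norm (u m - l) < e
}.

Definition unit_itv (R : realType) := {t : R | ((0 : R) <= t) && (t <= 1)}.

Lemma unit_itv0_proof (R : realType) : ((0 : R) <= 0) && ((0 : R) <= 1).
Proof. by rewrite lexx ler01. Qed.
Lemma unit_itv1_proof (R : realType) : ((0 : R) <= 1) && ((1 : R) <= 1).
Proof. by rewrite lexx ler01. Qed.

Definition itv0 (R : realType) : unit_itv R := exist _ 0 (unit_itv0_proof R).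
Definition itv1 (R : realType) : unit_itv R := exist _ 1 (unit_itv1_proof R).

Definition mx_cont1 (R : realType) k (f : unit_itv R -> 'M[R[i]]_k) :=
  forall (x : unit_itv R) (e : R), 0 < e -> exists2 d : R, 0 < d &
    forall y : unit_itv R, `|sval y - sval x| < d ->
      forall i j, `|f y i j - f x i j| < e%:C.

Definition cs_cont (R : realType) (B : cstar_alg R) (g : unit_itv R -> B) :=
  forall (x : unit_itv R) (e : R), 0 < e -> exists2 d : R, 0 < d &
    forall y : unit_itv R, `|sval y - sval x| < d -> cs_norm (g y - g x) < e.

Definition mx_star (R : realType) k (a : 'M[R[i]]_k) : 'M[R[i]]_k :=
  (map_mx (@conjc R) a)^T.

Definition Dn (R : realType) (n : nat) : (unit_itv R -> 'M[R[i]]_n) -> Prop :=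
  fun f => mx_cont1 f /\ (exists a : R[i], f (itv0 R) = a%:M)
                     /\ (exists b : R[i], f (itv1 R) = b%:M).

(* Minimal tensor square of a C*-subalgebra A of C([0,1]; M_n):       *)
(* realized inside C([0,1]^2; M_n (x) M_n) = C([0,1]^2; M_(n*n))       *)
(* (Kronecker product) as the uniform closure of the algebraic        *)
(* tensor product  A (.) A = span { (s,t) |-> f(s) (x) g(t) }.         *)
Definition tens_sq (R : realType) (n : nat) (A : (unit_itv R -> 'M[R[i]]_n) -> Prop)
  : (unit_itv R * unit_itv R -> 'M[R[i]]_(n * n)) -> Prop :=
  fun F => forall e : R, 0 < e ->
    exists (k : nat) (f g : 'I_k -> unit_itv R -> 'M[R[i]]_n),
      (forall l, A (f l) /\ A (g l)) /\
      forall x i j, `|F x i j - (\sum_(l < k) (f l x.1 *t g l x.2)) i j| < e%:C.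

Definition p0 (R : realType) n (f : unit_itv R -> 'M[R[i]]_n)
  : unit_itv R * unit_itv R -> 'M[R[i]]_(n * n) := fun x => f x.1 *t (1%:M : 'M_n).
Definition p1 (R : realType) n (f : unit_itv R -> 'M[R[i]]_n)
  : unit_itv R * unit_itv R -> 'M[R[i]]_(n * n) := fun x => (1%:M : 'M_n) *t f x.2.

Definition star_hom_on (R : realType) (X : Type) (k : nat)
  (P : (X -> 'M[R[i]]_k) -> Prop) (B : cstar_alg R) (h : (X -> 'M[R[i]]_k) -> B) :=
  (forall F G, P F -> P G -> h (fun x => F x + G x) = h F + h G) /\
  (forall (a : R[i]) F, P F -> h (fun x => a *: F x) = a *: h F) /\
  (forall F G, P F -> P G -> h (fun x => F x *m G x) = cs_mul (h F) (h G)) /\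
  (forall F, P F -> h (fun x => mx_star (F x)) = cs_star (h F)).

(* TC(A) <= m : there are C*-algebras B_1..B_m, surjective *-homomorphisms
   q_i : A (x) A -> B_i with trivial joint kernel, and *-homomorphisms
   sigma_i : A -> B_i (x) C[0,1] = C([0,1]; B_i) with ev_k o sigma_i = q_i o p_k. *)
Definition TC_le (R : realType) (n : nat) (A : (unit_itv R -> 'M[R[i]]_n) -> Prop)
  (m : nat) : Prop :=
  exists (B : 'I_m -> cstar_alg R)
         (q : forall i, (unit_itv R * unit_itv R -> 'M[R[i]]_(n * n)) -> B i)
         (sigma : forall i, (unit_itv R -> 'M[R[i]]_n) -> unit_itv R -> B i),
    (forall i, star_hom_on (tens_sq A) (q i)) /\
    (forall i (b : B i), exists2 F, tens_sq A F & q i F = b) /\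
    (forall F, tens_sq A F -> (forall i, q i F = 0) -> F = (fun _ => 0)) /\
    (forall i f, A f -> cs_cont (sigma i f)) /\
    (forall i t, star_hom_on A (fun f => sigma i f t)) /\
    (forall i f, A f -> sigma i f (itv0 R) = q i (p0 f)) /\
    (forall i f, A f -> sigma i f (itv1 R) = q i (p1 f)).

Definition TC_infinite (R : realType) (n : nat)
  (A : (unit_itv R -> 'M[R[i]]_n) -> Prop) : Prop :=
  forall m : nat, ~ TC_le A m.

(* If TC(D_n) were finite, the kernel of some q_i would lie in the kernel of
   the character ev : F |-> F(0,1)_00 of D_n (x) D_n (F(0,1) is always a scalar
   matrix): otherwise a product of one element of each ker q_i outside ker ev
   would be a nonzero element of the joint kernel. Then ev factors through a
   character chi of B_i, bounded by a Neumann series argument, and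
   t |-> chi (sigma_i (.) t) is a continuous path of characters of D_n from
   ev o p_0 to ev o p_1. Every character of D_n kills t(1-t) 1, whose square is
   a sum of products of the square-zero elements t(1-t) E_ab (a <> b, possible
   as n > 1); since f - f^2 = t(1-t) 1 for f(t) = (1-t) 1, every character is
   0 or 1 on f. But the path takes the value f(0) = 1 at t = 0 and f(1) = 0 at
   t = 1, contradicting the connectedness of [0, 1]. *)

From HB Require Import structures.
From mathcomp Require Import all_boot all_order all_algebra.
From mathcomp Require Import boolp classical_sets reals complex mxtens.
From mathcomp Require Import ring lra.

Set Implicit Arguments.
Unset Strict Implicit.
Unset Printing Implicit Defensive.
Import Order.TTheory GRing.Theory Num.Theory.
Local Open Scope ring_scope.
Local Open Scope complex_scope.

Local Notation normc := Normc.normc.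

Section ComplexModulus.
Variable R : realType.
Implicit Types (x y z : R[i]) (e : R).

Lemma normc_ge0 z : 0 <= normc z.
Proof. by case: z => a b; rewrite /Normc.normc sqrtr_ge0. Qed.

Lemma ltc_normc z e : (`|z| < e%:C) = (normc z < e).
Proof. by rewrite -ltcR. Qed.

Lemma normcB x y : normc (x - y) = normc (y - x).
Proof. by rewrite -normcN opprB. Qed.

Lemma normc_real (r : R) : normc r%:C = `|r|.
Proof. by rewrite /Normc.normc /= expr0n /= addr0 sqrtr_sqr. Qed.

Lemma normc_sum (I : finType) (F : I -> R[i]) :
  normc (\sum_i F i) <= \sum_i normc (F i).
Proof.
elim/big_rec2: _ => [|i y1 y2 _ IH]; first by rewrite Normc.normc0.
by apply: le_trans (le_normcD _ _) _; rewrite lerD2l.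
Qed.

Lemma normc_approx0 z : (forall e, 0 < e -> normc z < e) -> z = 0.
Proof.
move=> small; apply: Normc.eq0_normc; apply/eqP.
by rewrite eq_le normc_ge0 andbT; apply: gt_ge.
Qed.

Lemma mx_normc_bound k l (A : 'M[R[i]]_(k, l)) :
  exists2 M, 0 <= M & forall i j, normc (A i j) <= M.
Proof.
exists (\sum_i \sum_j normc (A i j)).
  by do 2![apply: sumr_ge0 => ? _]; apply: normc_ge0.
move=> i j; rewrite (bigD1 i) //= (bigD1 j) //= -addrA ler_wpDr //.
by apply: addr_ge0; do ?[apply: sumr_ge0 => ? _]; apply: normc_ge0.
Qed.

Lemma mulmx_normc_sub p q r (A A' : 'M[R[i]]_(p, q)) (B B' : 'M[R[i]]_(q, r))
    (MA MB eA eB : R) :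
  (forall i j, normc (A' i j) <= MA) -> (forall i j, normc (B i j) <= MB) ->
  (forall i j, normc (A i j - A' i j) <= eA) ->
  (forall i j, normc (B i j - B' i j) <= eB) ->
  forall i j, normc ((A *m B) i j - (A' *m B') i j) <= q%:R * (eA * MB + MA * eB).
Proof.
move=> hA' hB dA dB i j; rewrite !mxE -sumrB.
apply: le_trans (normc_sum _) _.
rewrite mulr_natl -[in X in _ <= X](card_ord q) -sumr_const; apply: ler_sum => k _.
have -> : A i k * B k j - A' i k * B' k j =
  (A i k - A' i k) * B k j + A' i k * (B k j - B' k j).
  by rewrite mulrBl mulrBr addrA subrK.
apply: le_trans (le_normcD _ _) _; rewrite !Normc.normcM.
by apply: lerD; apply: ler_pM => //; apply: normc_ge0.
Qed.

End ComplexModulus.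

Section UnitInterval.
Variable R : realType.
Implicit Types (t : unit_itv R).

Lemma itv_ge0 t : 0 <= sval t.
Proof. by case: t => x /= /andP[]. Qed.

Lemma itv_le1 t : sval t <= 1.
Proof. by case: t => x /= /andP[]. Qed.

Definition itv_of (x : R) (x0 : 0 <= x) (x1 : x <= 1) : unit_itv R :=
  exist _ x (introT andP (conj x0 x1)).

Lemma itv_le0 t : sval t <= 0 -> t = itv0 R.
Proof. by move=> t0; apply: val_inj; apply/eqP; rewrite eq_le t0 itv_ge0. Qed.

(* Apply the local step at the supremum of the points where [P] holds. *)
Lemma continuous_induction (P : R -> Prop) :
  (forall a b, b <= a -> P a -> P b) -> P 0 ->
  (forall x, 0 <= x -> x <= 1 -> exists2 d, 0 < d &
     forall a b, 0 <= a -> `|a - x| < d -> `|b - x| < d -> P a -> P b) ->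
  P 1.
Proof.
move=> Pdown P0 Pstep.
pose E : set R := fun x => [/\ 0 <= x, x <= 1 & P x].
have hs : has_sup E by split; [exists 0 | exists 1 => y []].
have s_ub := sup_upper_bound hs.
have s0 : 0 <= sup E by apply: s_ub.
have s1 : sup E <= 1 by apply: ge_sup; [exists 0 | move=> y []].
have [d d0 Hd] := Pstep _ s0 s1.
have [e [e0 e1 Pe] lt_e] := sup_adherent d0 hs.
have e_le : e <= sup E by apply: s_ub.
have e_near : `|e - sup E| < d by rewrite ltr_norml; apply/andP; split; lra.
have [le_next1|] := lerP (sup E + d / 2) 1.
  have : sup E + d / 2 <= sup E.
    apply: s_ub; split=> //; first lra.
    by apply: (Hd e) => //; rewrite ltr_norml; apply/andP; split; lra.
  lra.
by move=> gt1; apply: (Hd e) => //; rewrite ltr_norml; apply/andP; split; lra.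
Qed.

Lemma mx_cont1_bounded k (f : unit_itv R -> 'M[R[i]]_k) :
  mx_cont1 f -> exists2 M, 0 <= M & forall t i j, normc (f t i j) <= M.
Proof.
move=> fc.
pose P s := exists2 M, 0 <= M & forall t, sval t <= s ->
  forall i j, normc (f t i j) <= M.
suff [M M0 HM] : P 1 by exists M => // t; apply: HM; apply: itv_le1.
apply: continuous_induction.
- move=> a b ba [M M0 HM]; exists M => // t tb; apply: HM; exact: le_trans ba.
- have [M M0 HM] := mx_normc_bound (f (itv0 R)).
  by exists M => // t /itv_le0 ->.
move=> x x0 x1; have [d d0 Hd] := fc (itv_of x0 x1) 1 ltr01.
exists d => // a b a0 ha hb [Ma Ma0 HMa].
have [Mx Mx0 HMx] := mx_normc_bound (f (itv_of x0 x1)).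
exists (Ma + Mx + 1) => [|t tb i j]; first lra.
have [ta|lt_at] := lerP (sval t) a; first by have := HMa t ta i j; lra.
have tx : `|sval t - x| < d.
  move: ha hb; rewrite !ltr_norml => /andP[? ?] /andP[? ?].
  by apply/andP; split; lra.
have := Hd t tx i j; rewrite ltc_normc => near.
have := le_normcD (f t i j - f (itv_of x0 x1) i j) (f (itv_of x0 x1) i j).
rewrite subrK; have := HMx i j; lra.
Qed.

Lemma unit_itv_connected01 (g : unit_itv R -> R[i]) :
  (forall t, g t = 0 \/ g t = 1) ->
  (forall s e, 0 < e -> exists2 d, 0 < d &
     forall t, `|sval t - sval s| < d -> normc (g t - g s) < e) ->
  g (itv0 R) = 1 -> g (itv1 R) = 1.
Proof.
move=> g01 gc g0.
have jump t s : g s = 1 -> normc (g t - g s) < 1 -> g t = 1.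
  move=> ->; case: (g01 t) => -> //.
  by rewrite sub0r normcN Normc.normc1 ltxx.
pose P x := forall t, sval t <= x -> g t = 1.
suff : P 1 by apply; apply: itv_le1.
apply: continuous_induction.
- by move=> a b ba Pa t tb; apply: Pa; apply: le_trans ba.
- by move=> t /itv_le0 ->.
move=> x x0 x1; have [d d0 Hd] := gc (itv_of x0 x1) 1 ltr01.
exists d => // a b a0 ha hb Pa.
have gx : g (itv_of x0 x1) = 1.
  have [xa|ax] := lerP x a; first exact: Pa.
  have a1 : a <= 1 by lra.
  apply: (jump _ (itv_of a0 a1)); first exact: Pa.
  by rewrite normcB; apply: Hd.
move=> t tb; have [ta|lt_at] := lerP (sval t) a; first exact: Pa.
apply: (jump _ _ gx); apply: Hd.
move: ha hb; rewrite /= !ltr_norml => /andP[? ?] /andP[? ?].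
by apply/andP; split; lra.
Qed.

End UnitInterval.

Lemma small_factor (R : realFieldType) (e K : R) :
  0 < e -> 0 <= K -> exists2 d, 0 < d & d * K < e.
Proof.
move=> e0 K0; exists (e / (K + 1)); first by rewrite divr_gt0 //; lra.
rewrite mulrAC ltr_pdivrMr; last lra.
by rewrite ltr_pM2l //; lra.
Qed.

Section FunctionAlgebra.
Variables (R : realType) (n : nat).
Local Notation fn := (unit_itv R -> 'M[R[i]]_n).
Implicit Types (f g : fn).

Lemma mx_cont1_cst (M : 'M[R[i]]_n) : mx_cont1 (fun _ : unit_itv R => M).
Proof. by move=> x e e0; exists 1 => // y _ i j; rewrite subrr normr0 ltcR. Qed.

Lemma mx_cont1_mul f g : mx_cont1 f -> mx_cont1 g -> mx_cont1 (fun t => f t *m g t).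
Proof.
move=> fc gc x e e0.
have [Mf Mf0 HMf] := mx_cont1_bounded fc.
have [Mg Mg0 HMg] := mx_cont1_bounded gc.
have K0 : 0 <= n%:R * (Mf + Mg) by apply: mulr_ge0; [apply: ler0n | lra].
have [d d0 dK] := small_factor e0 K0.
have [df df0 Hf] := fc x d d0; have [dg dg0 Hg] := gc x d d0.
exists (Num.min df dg) => [|y]; first by rewrite lt_min df0 dg0.
rewrite lt_min => /andP[yf yg] i j; rewrite ltc_normc.
have nearf i' j' : normc (f y i' j' - f x i' j') <= d.
  by apply: ltW; rewrite -ltc_normc; apply: Hf.
have nearg i' j' : normc (g y i' j' - g x i' j') <= d.
  by apply: ltW; rewrite -ltc_normc; apply: Hg.
apply: le_lt_trans (mulmx_normc_sub (HMf x) (HMg y) nearf nearg i j) _.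
by rewrite (_ : _ * _ = d * (n%:R * (Mf + Mg))) //; ring.
Qed.

Lemma Dn_mul f g : Dn f -> Dn g -> Dn (fun t => f t *m g t).
Proof.
move=> [fc [[a fa] [b fb]]] [gc [[a' ga] [b' gb]]]; split; first exact: mx_cont1_mul.
by split; [exists (a * a') | exists (b * b')]; rewrite /= ?fa ?ga ?fb ?gb scalar_mxM.
Qed.

Lemma Dn_scale (a : R[i]) f : Dn f -> Dn (fun t => a *: f t).
Proof.
move=> [fc [[a0 fa] [b0 fb]]]; split.
  rewrite (_ : (fun t => _) = fun t => a%:M *m f t); last first.
    by apply: funext => t; rewrite mul_scalar_mx.
  exact: mx_cont1_mul (mx_cont1_cst _) fc.
by split; [exists (a * a0) | exists (a * b0)]; rewrite /= ?fa ?fb scale_scalar_mx.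
Qed.

Lemma Dn1 : Dn (fun _ : unit_itv R => (1%:M : 'M[R[i]]_n)).
Proof. by split; [exact: mx_cont1_cst | split; exists 1]. Qed.

Definition scalemx_fun (c : R -> R) (M : 'M[R[i]]_n) : fn :=
  fun t => (c (sval t))%:C *: M.

Lemma scalemx_funM (c c' : R -> R) (M M' : 'M[R[i]]_n) :
  (fun t => scalemx_fun c M t *m scalemx_fun c' M' t) =
  scalemx_fun (fun x => c x * c' x) (M *m M').
Proof.
apply: funext => t.
by rewrite /scalemx_fun -scalemxAl -scalemxAr scalerA rmorphM.
Qed.

Lemma mx_cont1_scalemx_fun (c : R -> R) (M : 'M[R[i]]_n) :
  (forall x y, 0 <= x <= 1 -> 0 <= y <= 1 -> `|c y - c x| <= `|y - x|) ->
  mx_cont1 (scalemx_fun c M).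
Proof.
move=> c_lip x e e0.
have [K K0 HK] := mx_normc_bound M.
have [d d0 dK] := small_factor e0 K0.
exists d => // y yx i j.
rewrite !mxE -mulrBl -rmorphB ltc_normc Normc.normcM normc_real.
have := c_lip _ _ (valP x) (valP y); have := HK i j.
have := normc_ge0 (M i j); have := normr_ge0 (c (sval y) - c (sval x)).
nra.
Qed.

Definition bump (x : R) := x * (1 - x).
Definition ramp (x : R) := 1 - x.

Lemma Dn_bump (M : 'M[R[i]]_n) : Dn (scalemx_fun bump M).
Proof.
split; last by split; exists 0;
  rewrite /scalemx_fun /bump /= (subr0, subrr) (mulr1, mulr0) rmorph0 scale0r raddf0.
apply: mx_cont1_scalemx_fun => x y /andP[x0 x1] /andP[y0 y1].
rewrite (_ : _ - _ = (y - x) * (1 - x - y)); last by rewrite /bump; ring.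
by rewrite normrM ler_piMr // ler_norml; apply/andP; split; lra.
Qed.

Lemma Dn_ramp : Dn (scalemx_fun ramp 1%:M).
Proof.
split; last by split; [exists (ramp 0)%:C | exists (ramp 1)%:C];
  rewrite /scalemx_fun scalemx1.
apply: mx_cont1_scalemx_fun => x y _ _.
by rewrite /ramp (_ : _ - _ = x - y) 1?distrC //; ring.
Qed.

End FunctionAlgebra.

Section TensorAlgebra.
Variable C : comPzRingType.

Lemma tensmxZl m1 m2 p1 p2 (a : C) (A : 'M[C]_(m1, m2)) (B : 'M[C]_(p1, p2)) :
  (a *: A) *t B = a *: (A *t B).
Proof. by apply/matrixP => i j; rewrite !mxE mulrA. Qed.

Lemma tensmx_scalar n (a b : C) : (a%:M : 'M_n) *t (b%:M : 'M_n) = (a * b)%:M.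
Proof.
apply/matrixP => i j.
case: (mxtens_indexP i) => i1 i2; case: (mxtens_indexP j) => j1 j2.
rewrite tensmxE !mxE (inj_eq (can_inj (@mxtens_indexK n n))) xpair_eqE.
by case: (i1 == j1); case: (i2 == j2); rewrite ?mulr1n ?mulr0n ?mul0r ?mulr0.
Qed.

End TensorAlgebra.

Section TensorSquare.
Variables (R : realType) (n : nat) (A : (unit_itv R -> 'M[R[i]]_n) -> Prop).
Local Notation fn := (unit_itv R -> 'M[R[i]]_n).
Local Notation Fn := (unit_itv R * unit_itv R -> 'M[R[i]]_(n * n)).
Implicit Types (F G : Fn).

Definition tens_sum k (f g : 'I_k -> fn) : Fn :=
  fun x => \sum_(l < k) (f l x.1 *t g l x.2).

Lemma tens_sqP F : tens_sq A F <-> forall e : R, 0 < e ->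
  exists k (f g : 'I_k -> fn), (forall l, A (f l) /\ A (g l)) /\
    forall x i j, normc (F x i j - tens_sum f g x i j) < e.
Proof.
by split=> H e e0; have [k [f [g [fgA approx]]]] := H e e0; exists k, f, g;
  split=> // x i j; [rewrite -ltc_normc | rewrite ltc_normc]; apply: approx.
Qed.

Lemma tens_sumM k1 k2 (f1 g1 : 'I_k1 -> fn) (f2 g2 : 'I_k2 -> fn) x :
  tens_sum f1 g1 x *m tens_sum f2 g2 x =
  tens_sum (fun l t => f1 (mxtens_unindex l).1 t *m f2 (mxtens_unindex l).2 t)
     (fun l t => g1 (mxtens_unindex l).1 t *m g2 (mxtens_unindex l).2 t) x.
Proof.
rewrite /tens_sum mulmx_suml.
transitivity (\sum_(u < k1) \sum_(v < k2)
   ((f1 u x.1 *m f2 v x.1) *t (g1 u x.2 *m g2 v x.2))).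
  apply: eq_bigr => u _; rewrite mulmx_sumr; apply: eq_bigr => v _.
  by rewrite tensmx_mul.
rewrite pair_big; apply: reindex => /=.
by exists (@mxtens_index k1 k2) => l; rewrite (mxtens_indexK, mxtens_unindexK).
Qed.

Lemma tens_sq_add F G : tens_sq A F -> tens_sq A G -> tens_sq A (fun x => F x + G x).
Proof.
move=> /tens_sqP approxF /tens_sqP approxG; apply/tens_sqP => e e0.
have e2 : 0 < e / 2 by lra.
have [k1 [f1 [g1 [fgA1 ap1]]]] := approxF _ e2.
have [k2 [f2 [g2 [fgA2 ap2]]]] := approxG _ e2.
pose cat (h1 : 'I_k1 -> fn) (h2 : 'I_k2 -> fn) (l : 'I_(k1 + k2)) :=
  match split l with inl u => h1 u | inr v => h2 v end.
exists (k1 + k2)%N, (cat f1 f2), (cat g1 g2); split.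
  by move=> l; rewrite /cat; case: (split l).
move=> x i j.
have -> : tens_sum (cat f1 f2) (cat g1 g2) x = tens_sum f1 g1 x + tens_sum f2 g2 x.
  by rewrite /tens_sum sumr_add /cat; congr (_ + _);
    apply: eq_bigr => u _; rewrite (unsplitK (inl u), unsplitK (inr u)).
rewrite !mxE (_ : _ - _ = (F x i j - tens_sum f1 g1 x i j) +
                          (G x i j - tens_sum f2 g2 x i j)); last by ring.
apply: le_lt_trans (le_normcD _ _) _.
by have := ap1 x i j; have := ap2 x i j; lra.
Qed.

Hypothesis A_scale : forall a f, A f -> A (fun t => a *: f t).

Lemma tens_sq_scale (a : R[i]) F : tens_sq A F -> tens_sq A (fun x => a *: F x).
Proof.
move=> /tens_sqP approxF; apply/tens_sqP => e e0.
have [d d0 da] := small_factor e0 (normc_ge0 a).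
have [k [f [g [fgA ap]]]] := approxF _ d0.
exists k, (fun l t => a *: f l t), g; split.
  by move=> l; have [fA gA] := fgA l; split=> //; apply: A_scale.
move=> x i j.
have -> : tens_sum (fun l t => a *: f l t) g x = a *: tens_sum f g x.
  by rewrite /tens_sum scaler_sumr; apply: eq_bigr => l _; rewrite tensmxZl.
rewrite !mxE -mulrBr Normc.normcM; apply: le_lt_trans da.
by rewrite mulrC ler_wpM2r ?normc_ge0 ?ltW.
Qed.

Hypothesis A_bounded : forall f, A f ->
  exists2 M, 0 <= M & forall t i j, normc (f t i j) <= M.

Lemma tens_sq_bounded F : tens_sq A F ->
  exists2 M, 0 <= M & forall x i j, normc (F x i j) <= M.
Proof.
move=> /tens_sqP approxF; have [k [f [g [fgA ap]]]] := approxF 1 ltr01.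
have fg_bounded l : exists M : R, 0 <= M /\ (forall t i j, normc (f l t i j) <= M)
    /\ (forall t i j, normc (g l t i j) <= M).
  have [/A_bounded[M1 M10 H1] /A_bounded[M2 M20 H2]] := fgA l.
  exists (M1 + M2); split; first lra.
  by split=> t i j; [have := H1 t i j | have := H2 t i j]; lra.
have [M HM] := fin_all_exists fg_bounded.
exists (\sum_l M l * M l + 1) => [|x i j].
  by apply: addr_ge0 => //; apply: sumr_ge0 => l _; have [? _] := HM l; apply: mulr_ge0.
have sum_bound : normc (tens_sum f g x i j) <= \sum_l M l * M l.
  rewrite /tens_sum summxE; apply: le_trans (normc_sum _) _.
  apply: ler_sum => l _; rewrite mxE Normc.normcM.
  by have [_ [Mf Mg]] := HM l; apply: ler_pM; rewrite ?normc_ge0.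
have := le_normcD (F x i j - tens_sum f g x i j) (tens_sum f g x i j).
by rewrite subrK; have := ap x i j; lra.
Qed.

Hypothesis A_mul : forall f g, A f -> A g -> A (fun t => f t *m g t).

Lemma tens_sq_mul F G : tens_sq A F -> tens_sq A G -> tens_sq A (fun x => F x *m G x).
Proof.
move=> FA GA; have [MF MF0 HMF] := tens_sq_bounded FA.
have [MG MG0 HMG] := tens_sq_bounded GA.
move: FA GA => /tens_sqP approxF /tens_sqP approxG; apply/tens_sqP => e e0.
have K0 : 0 <= (n * n)%:R * (MF + 1 + MG) by apply: mulr_ge0; [apply: ler0n | lra].
have [d0 d_gt0 dK] := small_factor e0 K0.
pose d := Num.min d0 1.
have d_pos : 0 < d by rewrite lt_min d_gt0 ltr01.
have [k1 [f1 [g1 [fgA1 ap1]]]] := approxF _ d_pos.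
have [k2 [f2 [g2 [fgA2 ap2]]]] := approxG _ d_pos.
exists (k1 * k2)%N,
  (fun l t => f1 (mxtens_unindex l).1 t *m f2 (mxtens_unindex l).2 t),
  (fun l t => g1 (mxtens_unindex l).1 t *m g2 (mxtens_unindex l).2 t).
split=> [l|x i j].
  have [? ?] := fgA1 (mxtens_unindex l).1; have [? ?] := fgA2 (mxtens_unindex l).2.
  by split; apply: A_mul.
have d_le1 : d <= 1 by rewrite ge_min lexx orbT.
have d_le0 : d <= d0 by rewrite ge_min lexx.
have sum1_bound i' j' : normc (tens_sum f1 g1 x i' j') <= MF + 1.
  have := le_normcD (tens_sum f1 g1 x i' j' - F x i' j') (F x i' j').
  by rewrite subrK normcB; have := ap1 x i' j'; have := HMF x i' j'; lra.
have near1 i' j' : normc (F x i' j' - tens_sum f1 g1 x i' j') <= d by apply: ltW.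
have near2 i' j' : normc (G x i' j' - tens_sum f2 g2 x i' j') <= d by apply: ltW.
rewrite -tens_sumM.
apply: le_lt_trans (mulmx_normc_sub sum1_bound (HMG x) near1 near2 i j) _.
rewrite (_ : _ * _ = d * ((n * n)%:R * (MF + 1 + MG))); last by ring.
by apply: le_lt_trans dK; rewrite ler_wpM2r.
Qed.

Hypothesis A1 : A (fun _ => 1%:M).

Lemma tens_sq_p0 f : A f -> tens_sq A (p0 f).
Proof.
move=> fA; apply/tens_sqP => e e0.
exists 1%N, (fun _ => f), (fun _ _ => 1%:M); split=> // x i j.
by rewrite /tens_sum big_ord1 /p0 subrr Normc.normc0.
Qed.

Lemma tens_sq_p1 f : A f -> tens_sq A (p1 f).
Proof.
move=> fA; apply/tens_sqP => e e0.
exists 1%N, (fun _ _ => 1%:M), (fun _ => f); split=> // x i j.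
by rewrite /tens_sum big_ord1 /p1 subrr Normc.normc0.
Qed.

Hypothesis A_scalar0 : forall f, A f -> exists a, f (itv0 R) = a%:M.
Hypothesis A_scalar1 : forall f, A f -> exists b, f (itv1 R) = b%:M.

Lemma tens_sq_scalar01 F (i0 : 'I_(n * n)) : tens_sq A F ->
  F (itv0 R, itv1 R) = (F (itv0 R, itv1 R) i0 i0)%:M.
Proof.
move=> /tens_sqP approxF; set F01 := F (itv0 R, itv1 R).
have near_scalar e : 0 < e -> exists c : R[i], forall i j,
    normc (F01 i j - (c%:M : 'M_(n * n)) i j) < e.
  move=> e0; have [k [f [g [fgA ap]]]] := approxF e e0.
  have [a Ha] := fin_all_exists (fun l => A_scalar0 (fgA l).1).
  have [b Hb] := fin_all_exists (fun l => A_scalar1 (fgA l).2).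
  exists (\sum_l a l * b l) => i j.
  suff <- : tens_sum f g (itv0 R, itv1 R) = (\sum_l a l * b l)%:M by apply: ap.
  by rewrite /tens_sum raddf_sum; apply: eq_bigr => l _; rewrite /= Ha Hb tensmx_scalar.
apply/matrixP => i j; rewrite [RHS]mxE; have [<-|neq_ij] := eqVneq i j.
  rewrite mulr1n; apply/eqP; rewrite -subr_eq0; apply/eqP; apply: normc_approx0 => e e0.
  have [c Hc] := near_scalar (e / 2) ltac:(lra).
  have := Hc i i; have := Hc i0 i0; rewrite !mxE !eqxx !mulr1n => near_i0 near_i.
  rewrite (_ : _ - _ = (F01 i i - c) - (F01 i0 i0 - c)); last by ring.
  by apply: le_lt_trans (le_normcD _ _) _; rewrite normcN; lra.
rewrite mulr0n; apply: normc_approx0 => e e0; have [c Hc] := near_scalar e e0.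
by have := Hc i j; rewrite mxE (negbTE neq_ij) mulr0n subr0.
Qed.

Lemma tens_sq_ev01M F G (i0 : 'I_(n * n)) : tens_sq A F ->
  (F (itv0 R, itv1 R) *m G (itv0 R, itv1 R)) i0 i0 =
  F (itv0 R, itv1 R) i0 i0 * G (itv0 R, itv1 R) i0 i0.
Proof. by move=> FA; rewrite {1}(tens_sq_scalar01 i0 FA) mul_scalar_mx mxE. Qed.

End TensorSquare.

Lemma exists_half_expn_lt (R : archiRealFieldType) (e : R) : 0 < e ->
  exists N, (2^-1) ^+ N < e.
Proof.
move=> e0; have e_inv : 0 <= e^-1 by rewrite invr_ge0 ltW.
have := archi_boundP e_inv.
set N := Num.Def.archi_bound _ => ltN; exists N.
have lt_2N : (N%:R : R) < 2 ^+ N by rewrite -natrX ltr_nat ltn_expl.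
rewrite exprVn -[e]invrK ltf_pV2 ?posrE ?exprn_gt0 ?invr_gt0 //.
exact: lt_trans lt_2N.
Qed.

Section CStarAlgebra.
Variables (R : realType) (B : cstar_alg R).
Implicit Types (x y w : B).

Lemma cs_mul0r y : cs_mul 0 y = 0.
Proof. by have := cs_mulZl 0 0 y; rewrite !scale0r. Qed.

Lemma cs_mulr0 x : cs_mul x 0 = 0.
Proof. by have := cs_mulZr 0 x 0; rewrite !scale0r. Qed.

Lemma cs_mulrBr x y1 y2 : cs_mul x (y1 - y2) = cs_mul x y1 - cs_mul x y2.
Proof. by rewrite cs_mulDr -scaleN1r cs_mulZr scaleN1r. Qed.

Lemma cs_normZR (a : R[i]) x : cs_norm (a *: x) = normc a * cs_norm x.
Proof. by apply: complexI; rewrite cs_normZ rmorphM. Qed.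

Lemma cs_norm0 : cs_norm (0 : B) = 0.
Proof. by rewrite -(scale0r (0 : B)) cs_normZR Normc.normc0 mul0r. Qed.

Lemma cs_normN x : cs_norm (- x) = cs_norm x.
Proof. by rewrite -scaleN1r cs_normZR normcN Normc.normc1 mul1r. Qed.

Lemma cs_norm_ge0 x : 0 <= cs_norm x.
Proof. by have := cs_normD x (- x); rewrite subrr cs_norm0 cs_normN; lra. Qed.

Lemma cs_normB x y : cs_norm (x - y) = cs_norm (y - x).
Proof. by rewrite -cs_normN opprB. Qed.

Lemma cs_geometric_cauchy (u : nat -> B) :
  (forall k, cs_norm (u k.+1 - u k) <= (2^-1) ^+ k.+1) ->
  exists l, forall e : R, 0 < e -> exists N, forall m, (N <= m)%N ->
    cs_norm (u m - l) < e.
Proof.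
move=> step.
have tail k j : cs_norm (u (k + j)%N - u k) <= (2^-1) ^+ k - (2^-1) ^+ (k + j).
  elim: j => [|j IH]; first by rewrite addn0 !subrr cs_norm0.
  rewrite addnS -(subrK (u (k + j)%N) (u (k + j).+1)) -addrA.
  apply: le_trans (cs_normD _ _) _.
  have := step (k + j)%N; rewrite [in X in _ -> X]exprS [in X in _ <= X]exprS.
  lra.
apply: cs_complete => e e0; have [N ltN] := exists_half_expn_lt e0.
exists N => m k hm hk.
wlog le_km : m k hm hk / (k <= m)%N.
  move=> W; have [|/ltnW] := leqP k m; first exact: W.
  by rewrite cs_normB; apply: W.
have expn_le j : (2^-1 : R) ^+ (N + j) <= (2^-1) ^+ N.
  by rewrite exprD ler_piMr ?exprn_ge0 ?exprn_ile1 //; lra.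
rewrite -(subnKC le_km); have := tail k (m - k)%N.
have := expn_le (k - N)%N; rewrite subnKC //.
have : (0 : R) <= (2^-1) ^+ (k + (m - k)) by apply: exprn_ge0; lra.
lra.
Qed.

(* [y] is the sum of the Neumann series [w + w^2 + w^3 + ...]. *)
Lemma cs_quasi_inverse w : cs_norm w <= 2^-1 -> exists y, y = w + cs_mul w y.
Proof.
move=> small_w.
pose s k := iter k (fun y => w + cs_mul w y) 0.
have step k : cs_norm (s k.+1 - s k) <= (2^-1) ^+ k.+1.
  elim: k => [|k IH]; first by rewrite /s /= cs_mulr0 addr0 subr0 expr1.
  rewrite [s k.+2]/= [s k.+1]/= opprD addrACA subrr add0r -cs_mulrBr.
  apply: le_trans (cs_normM _ _) _.
  by rewrite exprS ler_pM ?cs_norm_ge0.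
have [l lim_l] := cs_geometric_cauchy step.
exists l; apply/eqP; rewrite -subr_eq0; apply/eqP; apply: cs_norm_eq0.
apply/eqP; rewrite eq_le cs_norm_ge0 andbT; apply: gt_ge => e e0.
have [N HN] := lim_l (e / 2) ltac:(lra).
have near1 := HN N.+1 (leqnSn N); have near0 := HN N (leqnn N).
have -> : l - (w + cs_mul w l) = (l - s N.+1) + cs_mul w (s N - l).
  by rewrite [s N.+1]/= cs_mulrBr !opprD !addrA subrK.
apply: le_lt_trans (cs_normD _ _) _; rewrite cs_normB.
have := cs_normM w (s N - l); have := cs_norm_ge0 (s N - l); nra.
Qed.

Lemma cs_character_bound (chi : B -> R[i]) :
  (forall x y, chi (x + y) = chi x + chi y) ->
  (forall a x, chi (a *: x) = a * chi x) ->
  (forall x y, chi (cs_mul x y) = chi x * chi y) ->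
  forall x, normc (chi x) <= 2 * cs_norm x.
Proof.
move=> chiD chiZ chiM x; rewrite leNgt; apply/negP => big_chi.
have nx := cs_norm_ge0 x.
have chi_neq0 : chi x != 0.
  by apply: contraTneq big_chi => ->; rewrite Normc.normc0 -leNgt; lra.
have small : cs_norm ((chi x)^-1 *: x) <= 2^-1.
  rewrite cs_normZR Normc.normcV mulrC ler_pdivrMr; lra.
have [y def_y] := cs_quasi_inverse small.
have := congr1 chi def_y; rewrite chiD chiM chiZ mulVf // mul1r.
by move/eqP; rewrite -subr_eq subrr eq_sym oner_eq0.
Qed.

Lemma cs_cont_character (chi : B -> R[i]) (g : unit_itv R -> B) :
  (forall x y, chi (x + y) = chi x + chi y) ->
  (forall a x, chi (a *: x) = a * chi x) ->
  (forall x y, chi (cs_mul x y) = chi x * chi y) ->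
  cs_cont g -> forall s e, 0 < e -> exists2 d, 0 < d &
    forall t, `|sval t - sval s| < d -> normc (chi (g t) - chi (g s)) < e.
Proof.
move=> chiD chiZ chiM g_cont s e e0.
have [d d0 near] := g_cont s (e / 2) ltac:(lra).
exists d => // t ts; have := near t ts.
have -> : chi (g t) - chi (g s) = chi (g t - g s).
  by rewrite -scaleN1r chiD chiZ mulN1r.
by have := cs_character_bound chiD chiZ chiM (g t - g s); lra.
Qed.

End CStarAlgebra.

Definition character_on (R : realType) (X : Type) (k : nat)
    (S : (X -> 'M[R[i]]_k) -> Prop) (chi : (X -> 'M[R[i]]_k) -> R[i]) :=
  [/\ forall F G, S F -> S G -> chi (fun x => F x + G x) = chi F + chi G,
      forall a F, S F -> chi (fun x => a *: F x) = a * chi F &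
      forall F G, S F -> S G -> chi (fun x => F x *m G x) = chi F * chi G].

Section Characters.
Variables (R : realType) (X : Type) (k : nat) (S : (X -> 'M[R[i]]_k) -> Prop).
Implicit Types (F G : X -> 'M[R[i]]_k) (chi : (X -> 'M[R[i]]_k) -> R[i]).

Lemma character_on0 chi F : character_on S chi -> S F -> chi (fun _ => 0) = 0.
Proof.
move=> [_ chiZ _] SF.
by rewrite -(mul0r (chi F)) -chiZ //; congr chi; apply: funext => x; rewrite scale0r.
Qed.

Lemma character_on_sqr_eq0 chi F : character_on S chi -> S F ->
  chi (fun x => F x *m F x) = 0 -> chi F = 0.
Proof.
by move=> [_ _ chiM] SF; rewrite chiM // => /eqP; rewrite mulf_eq0 orbb => /eqP.
Qed.

Lemma character_on_comp (B : cstar_alg R) (h : (X -> 'M[R[i]]_k) -> B)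
    (chi : B -> R[i]) :
  star_hom_on S h ->
  (forall x y, chi (x + y) = chi x + chi y) ->
  (forall a x, chi (a *: x) = a * chi x) ->
  (forall x y, chi (cs_mul x y) = chi x * chi y) ->
  character_on S (fun F => chi (h F)).
Proof.
move=> [hD [hZ [hM _]]] chiD chiZ chiM.
by split=> [F G SF SG|a F SF|F G SF SG]; rewrite ?hD ?hZ ?hM ?chiD ?chiZ ?chiM.
Qed.

Hypothesis S_mul : forall F G, S F -> S G -> S (fun x => F x *m G x).

Lemma kernel_selection m (B : 'I_m -> cstar_alg R)
    (q : forall i, (X -> 'M[R[i]]_k) -> B i) chi u :
  (forall i, star_hom_on S (q i)) ->
  (forall F, S F -> (forall i, q i F = 0) -> F = (fun _ => 0)) ->
  character_on S chi -> S u -> chi u != 0 ->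
  exists i, forall F, S F -> q i F = 0 -> chi F = 0.
Proof.
move=> q_hom q_ker chi_char Su chi_u; have [_ _ chiM] := chi_char.
apply/not_existsP => no_kernel.
have outside i : exists F, [/\ S F, q i F = 0 & chi F != 0].
  have /existsNP[F /not_implyP[SF /not_implyP[qF /eqP chiF]]] := no_kernel i.
  by exists F.
have [F HF] := choice outside.
have prod j : (j <= m)%N ->
    exists G, [/\ S G, chi G != 0 & forall i : 'I_m, (i < j)%N -> q i G = 0].
  elim: j => [_|j IH lt_jm]; first by exists u.
  have [G [SG chiG qG]] := IH (ltnW lt_jm).
  have [SF qF chiF] := HF (Ordinal lt_jm).
  exists (fun x => G x *m F (Ordinal lt_jm) x).
  split=> [||i]; [exact: S_mul | by rewrite chiM // mulf_neq0 |].
  have [_ [_ [qM _]]] := q_hom i; rewrite ltnS leq_eqVlt qM //.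
  case/orP=> [/eqP eq_ij|/qG ->]; last exact: cs_mul0r.
  by rewrite (_ : i = Ordinal lt_jm) ?qF ?cs_mulr0 //; apply: val_inj.
have [G [SG chiG qG]] := prod m (leqnn m).
move: chiG; rewrite (q_ker G SG (fun i => qG i (ltn_ord i))).
by rewrite (character_on0 chi_char Su) eqxx.
Qed.

Hypothesis S_add : forall F G, S F -> S G -> S (fun x => F x + G x).
Hypothesis S_scale : forall a F, S F -> S (fun x => a *: F x).

Lemma character_factor (B : cstar_alg R) (q : (X -> 'M[R[i]]_k) -> B) chi :
  star_hom_on S q -> (forall b, exists2 F, S F & q F = b) ->
  character_on S chi -> (forall F, S F -> q F = 0 -> chi F = 0) ->
  exists chiB : B -> R[i], [/\ forall x y, chiB (x + y) = chiB x + chiB y,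
     forall a x, chiB (a *: x) = a * chiB x,
     forall x y, chiB (cs_mul x y) = chiB x * chiB y &
     forall F, S F -> chiB (q F) = chi F].
Proof.
move=> [qD [qZ [qM _]]] q_onto [chiD chiZ chiM] ker_chi.
have onto b : exists F, S F /\ q F = b by have [F SF qF] := q_onto b; exists F.
have [pre pre_spec] := choice onto.
have Spre b : S (pre b) by have [] := pre_spec b.
have qpre b : q (pre b) = b by have [] := pre_spec b.
have chi_q F : S F -> chi (pre (q F)) = chi F.
  move=> SF; have S_neg : S (fun x => (-1) *: F x) by auto.
  have S_diff : S (fun x => pre (q F) x + (-1) *: F x) by auto.
  have /(ker_chi _ S_diff) : q (fun x => pre (q F) x + (-1) *: F x) = 0.
    by rewrite qD ?qZ ?qpre ?scaleN1r ?subrr.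
  by rewrite chiD ?chiZ // => diff0; rewrite -[LHS]subr0 -diff0; ring.
exists (fun b => chi (pre b)); split=> // [x y|a x|x y].
- by rewrite -{1}(qpre x) -{1}(qpre y) -qD // chi_q ?chiD; auto.
- by rewrite -{1}(qpre x) -qZ // chi_q; auto.
- by rewrite -{1}(qpre x) -{1}(qpre y) -qM // chi_q ?chiM; auto.
Qed.

End Characters.

Section DnCharacters.
Variables (R : realType) (n : nat) (psi : (unit_itv R -> 'M[R[i]]_n) -> R[i]).
Hypothesis n_gt1 : (1 < n)%N.
Hypothesis psi_char : character_on (@Dn R n) psi.
Local Notation bump := (@bump R).
Local Notation ramp := (@ramp R).

Lemma exists_ord_neq (a : 'I_n) : exists b : 'I_n, a != b.
Proof.
have [/eqP a0|a_neq0] := boolP (val a == 0%N).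
  by exists (Ordinal n_gt1); apply/eqP => /(congr1 val); rewrite /= a0.
by exists (Ordinal (ltnW n_gt1)); apply: contraNneq a_neq0 => ->.
Qed.

(* [bump^2 E_aa] is the product of the square-zero elements [bump E_ab] and
   [bump E_ba], so [psi] kills [bump^2 1], hence [bump 1]. *)
Lemma Dn_character_bump : psi (scalemx_fun bump 1%:M) = 0.
Proof.
have [psiD _ psiM] := psi_char.
pose bump2 x := bump x * bump x.
have Dn_bump2 M : Dn (scalemx_fun bump2 M).
  by rewrite -[M]mulmx1 -scalemx_funM; apply: Dn_mul; apply: Dn_bump.
pose psi2 M := psi (scalemx_fun bump2 M).
have psi2D M M' : psi2 (M + M') = psi2 M + psi2 M'.
  rewrite /psi2 -psiD //; congr psi; apply: funext => t.
  by rewrite /scalemx_fun scalerDr.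
have psi2_0 : psi2 0 = 0 by apply: (@addrI _ (psi2 0)); rewrite -psi2D !addr0.
have off_diag a b : a != b -> psi (scalemx_fun bump (delta_mx a b)) = 0.
  move=> neq_ab; apply: (character_on_sqr_eq0 psi_char (Dn_bump _)).
  by rewrite scalemx_funM mul_delta_mx_cond eq_sym (negbTE neq_ab) mulr0n.
have diag a : psi2 (delta_mx a a) = 0.
  have [b neq_ab] := exists_ord_neq a.
  rewrite /psi2 -(mul_delta_mx b a) -scalemx_funM psiM ?(off_diag _ _ neq_ab);
    by rewrite ?mul0r //; apply: Dn_bump.
apply: (character_on_sqr_eq0 psi_char (Dn_bump _)).
rewrite scalemx_funM mulmx1 -/(psi2 _) mx1_sum_delta (big_morph psi2 psi2D psi2_0).
by apply: big1 => a _; apply: diag.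
Qed.

Lemma Dn_character_ramp :
  psi (scalemx_fun ramp 1%:M) = 0 \/ psi (scalemx_fun ramp 1%:M) = 1.
Proof.
have [psiD psiZ psiM] := psi_char; set f := scalemx_fun ramp 1%:M.
have Df : Dn f := Dn_ramp R n.
have Df2 : Dn (fun t => f t *m f t) by apply: Dn_mul.
have bumpE : (fun t => f t + (-1) *: (f t *m f t)) = scalemx_fun bump 1%:M.
  apply: funext => t; rewrite /f /scalemx_fun -scalemxAl -scalemxAr mulmx1.
  rewrite !scalerA -scalerDl; congr (_ *: _).
  by rewrite /bump /ramp !(rmorphM, rmorphB, rmorph1); ring.
have : psi f * (1 - psi f) = 0.
  rewrite -Dn_character_bump -bumpE psiD ?psiZ ?psiM //; last exact: Dn_scale.
  by ring.
by move/eqP; rewrite mulf_eq0 subr_eq0 => /orP[] /eqP; [left | right].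
Qed.

End DnCharacters.

Lemma Dn_ev01_character (R : realType) (n : nat) (i0 : 'I_(n * n)) :
  character_on (tens_sq (@Dn R n)) (fun F => F (itv0 R, itv1 R) i0 i0).
Proof.
split=> [F G _ _|a F _|F G FD _]; [by rewrite mxE | by rewrite mxE |].
exact: (@tens_sq_ev01M R n (@Dn R n) (fun f Df => proj1 (proj2 Df))
  (fun f Df => proj2 (proj2 Df)) F G i0 FD).
Qed.

Theorem mainTheorem18 (R : realType) (n : nat) (hn : (1 < n)%N) :
  TC_infinite (@Dn R n).
Proof.
move=> m [B [q [sigma [q_hom [q_onto [q_ker [sigma_cont [sigma_hom [sigma0 sigma1]]]]]]]]].
have TS_mul :=
  tens_sq_mul (fun f (Df : Dn f) => mx_cont1_bounded (proj1 Df)) (@Dn_mul R n).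
have TS_scale := tens_sq_scale (@Dn_scale R n).
have nn_gt0 : (0 < n * n)%N by rewrite muln_gt0 ltnW.
pose i0 : 'I_(n * n) := Ordinal nn_gt0.
have ev_char := Dn_ev01_character R i0.
have [i ker_i] : exists i, forall F, tens_sq (@Dn R n) F -> q i F = 0 ->
    F (itv0 R, itv1 R) i0 i0 = 0.
  apply: (kernel_selection TS_mul q_hom q_ker ev_char
           (tens_sq_p0 (@Dn1 R n) (@Dn1 R n))).
  by rewrite /p0 tensmx_scalar mulr1 mxE eqxx oner_neq0.
have [chi [chiD chiZ chiM chi_q]] :=
  character_factor TS_mul (@tens_sq_add R n _) TS_scale (q_hom i) (q_onto i)
    ev_char ker_i.
pose f : unit_itv R -> 'M[R[i]]_n := scalemx_fun (@ramp R) 1%:M.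
pose g t := chi (sigma i f t).
have g01 t : g t = 0 \/ g t = 1.
  exact: Dn_character_ramp hn (character_on_comp (sigma_hom i t) chiD chiZ chiM).
have Df : Dn f := Dn_ramp R n.
have g_cont := cs_cont_character chiD chiZ chiM (sigma_cont i f Df).
have g0 : g (itv0 R) = 1.
  rewrite /g sigma0 // chi_q; last exact (tens_sq_p0 (@Dn1 R n) Df).
  rewrite /p0 /f /scalemx_fun /ramp subr0 rmorph1 scale1r tensmx_scalar.
  by rewrite mulr1 mxE eqxx.
have g1 : g (itv1 R) = 0.
  rewrite /g sigma1 // chi_q; last exact (tens_sq_p1 (@Dn1 R n) Df).
  by rewrite /p1 /f /scalemx_fun /ramp subrr rmorph0 scale0r tensmx0 mxE.
have := unit_itv_connected01 g01 g_cont g0.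
by rewrite g1 => /eqP; rewrite eq_sym oner_eq0.
Qed.
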